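(* Let $N\geq 3$ be prime, $q\in\mathbb{C}$ with $q^N=1$, $q\neq 1$, and let $X\subset\mathbb{R}^d$ be a convex subspace. Let $\tau:\Delta^m\to X$ and $\sigma:\Delta^n\to X$ be singular simplices ($m,n\geq 0$). Then for every integer $k\geq 0$, $$\partial^k(\tau*\sigma)=\sum_{i=0}^k q^{\,i(m+1-k+i)}\binom{k}{i}_q\,\mathcal{N}^{k-i}(\tau)*\mathcal{N}^{i}(\sigma).$$
   Context: $q$-numbers: $[k]_q=1+q+\cdots+q^{k-1}$, $[k]_q!=[1]_q\cdots[k]_q$ (with $[0]_q!=1$); $\binom{k}{i}_q$ denotes the Gaussian $q$-binomial coefficient evaluated at $q$, which equals $[k]_q!/([i]_q![k-i]_q!)$ for $0\le i\le k\le N-1$ and satisfies $\binom{n}{k}_q+q^{k+1}\binom{n}{k+1}_q=\binom{n+1}{k+1}_q$. Singular $q$-chains: $C^q_n(X)$ is the free $\mathbb{Z}[q]$-module on continuous maps $\Delta^n\to X$, $\Delta^n$ the convex hull of the standard basis $e_0,\dots,e_n$ of $\mathbb{R}^{n+1}$; $\partial_j\sigma=\sigma\circ\lambda_j$ with $\lambda_j:\Delta^{n-1}\to\Delta^n$ the affine map sending $e_0,\dots,e_{n-1}$ in order to $e_0,\dots,\widehat{e_j},\dots,e_n$; border map $\partial=\sum_{j=0}^n q^j\partial_j$ on $C^q_n(X)$ ($n\ge1$), $\partial=0$ on $C^q_0(X)$. Convex product: for $\tau:\Delta^m\to X$, $\sigma:\Delta^n\to X$ and $(\alpha;\beta)=(\alpha_0,\dots,\alpha_m;\beta_0,\dots,\beta_n)\in\Delta^{m+n+1}$,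 $\tau*\sigma(\alpha;\beta)$ is $\tau(\alpha)$ if $|\beta|=0$, $\sigma(\beta)$ if $|\alpha|=0$, and $|\alpha|\tau(\alpha/|\alpha|)+|\beta|\sigma(\beta/|\beta|)$ otherwise ($|\alpha|=\sum\alpha_i$, $|\beta|=\sum\beta_j$), extended bilinearly to chains. Newton's terms of a singular $m$-simplex $\tau$: $\mathcal{N}^i(\tau)=\partial^i(\tau)$ for $i\le m$, $\mathcal{N}^{m+1}(\tau)=[m+1]_q!\in\mathbb{Z}[q]$, and $\mathcal{N}^i(\tau)=0$ for $i\geq m+2$. Convention for convex products involving scalars: for $c\in\mathbb{Z}[q]$ and a chain $\xi$ of dimension $\ge0$, $c*\xi=\xi*c=c\,\xi$; for $c,c'\in\mathbb{Z}[q]$, $c*c'=0$. *)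

From HB Require Import structures.
From mathcomp Require Import all_boot all_order all_algebra.
From mathcomp Require Import algC.
From mathcomp Require Import boolp reals.
Set Implicit Arguments. Unset Strict Implicit. Unset Printing Implicit Defensive.
Import Order.TTheory GRing.Theory Num.Theory.
Local Open Scope ring_scope.

Section QChains.
Variables (R : realType) (d : nat).

(* Points of R^{n+1} are encoded as  nat -> R  (coordinates beyond n are 0). *)
Definition pt := nat -> R.

Definition inDelta (n : nat) (x : pt) : Prop :=
  [/\ forall i, (i <= n)%N -> 0 <= x i,
      forall i, (n < i)%N -> x i = 0
    & \sum_(i < n.+1) x i = 1].

(* A (candidate) singular n-simplex: a map Delta^n -> R^d; only its values on
   Delta^n matter (see simplex_eq). *)
Record simplex := Simplex { sdim : nat; smap : pt -> 'rV[R]_d }.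

Definition simplex_eq (s t : simplex) : Prop :=
  sdim s = sdim t /\ forall x, inDelta (sdim s) x -> smap s x = smap t x.

Definition cont_on_Delta (s : simplex) : Prop :=
  forall x, inDelta (sdim s) x -> forall e : R, 0 < e ->
  exists2 del : R, 0 < del & forall y, inDelta (sdim s) y ->
    (forall i, (i <= sdim s)%N -> `|y i - x i| < del) ->
    forall j, `|smap s y 0 j - smap s x 0 j| < e.

Definition singular_in (X : 'rV[R]_d -> Prop) (s : simplex) : Prop :=
  cont_on_Delta s /\ forall x, inDelta (sdim s) x -> X (smap s x).

Definition convex_set (X : 'rV[R]_d -> Prop) : Prop :=
  forall x y, X x -> X y -> forall t : R, 0 <= t <= 1 -> X (t *: x + (1 - t) *: y).

(* q-chains: formal (finite) linear combinations of simplices with coefficients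
   in algC (containing Z[q]); equality is equality of all coefficients. *)
Definition chain := seq (algC * simplex).

Definition coef (c : chain) (s : simplex) : algC :=
  \sum_(p <- c) (if `[< simplex_eq p.2 s >] then p.1 else 0).

Definition chain_eq (c c' : chain) : Prop := forall s, coef c s = coef c' s.

Definition scale_chain (a : algC) (c : chain) : chain :=
  [seq (a * p.1, p.2) | p <- c].

(* lambda_j : Delta^{n-1} -> Delta^n, e_i |-> e_i (i<j), e_i |-> e_{i+1} (i>=j). *)
Definition face (j : nat) (x : pt) : pt :=
  fun k => if (k < j)%N then x k else if k == j then 0 else x k.-1.

Definition bd_simplex (q : algC) (s : simplex) : chain :=
  match sdim s with
  | 0 => [::]
  | n.+1 => [seq (q ^+ j, Simplex n (smap s \o face j)) | j <- iota 0 n.+2]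
  end.

Definition bd (q : algC) (c : chain) : chain :=
  flatten [seq scale_chain p.1 (bd_simplex q p.2) | p <- c].

Definition bdn (q : algC) (k : nat) (c : chain) : chain := iter k (bd q) c.

(* Convex product of simplices tau (dim m) and sigma (dim n):
   a point of Delta^{m+n+1} is (alpha_0..alpha_m ; beta_0..beta_n). *)
Definition alpha (m : nat) (x : pt) : pt := fun i => if (i <= m)%N then x i else 0.
Definition beta (m n : nat) (x : pt) : pt :=
  fun j => if (j <= n)%N then x (m.+1 + j)%N else 0.

Definition sjoin (t s : simplex) : simplex :=
  let m := sdim t in let n := sdim s in
  Simplex (m + n + 1)
   (fun x =>
      let a := alpha m x in let b := beta m n x in
      let na := \sum_(i < m.+1) a i in let nb := \sum_(j < n.+1) b j in
      if nb == 0 then smap t a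
      else if na == 0 then smap s b
      else na *: smap t (fun i => a i / na) + nb *: smap s (fun j => b j / nb)).

Definition cprod (c c' : chain) : chain :=
  [seq (p.1 * p'.1, sjoin p.2 p'.2) | p <- c, p' <- c'].

Definition qint (q : algC) (k : nat) : algC := \sum_(l < k) q ^+ l.
Definition qfact (q : algC) (k : nat) : algC := \prod_(j < k) qint q j.+1.

Fixpoint qbinom (q : algC) (n k : nat) {struct n} : algC :=
  match n, k with
  | _, 0 => 1
  | 0, _.+1 => 0
  | n'.+1, k'.+1 => qbinom q n' k' + q ^+ k * qbinom q n' k
  end.

Inductive nterm := NC of chain | NS of algC.

Definition newton (q : algC) (t : simplex) (i : nat) : nterm :=
  if (i <= sdim t)%N then NC (bdn q i [:: (1, t)])
  else if i == (sdim t).+1 then NS (qfact q i)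
  else NC [::].

Definition nprod (a b : nterm) : chain :=
  match a, b with
  | NC c, NC c' => cprod c c'
  | NS x, NC c' => scale_chain x c'
  | NC c, NS y => scale_chain y c
  | NS _, NS _ => [::]
  end.

End QChains.

From mathcomp Require Import all_boot all_order all_algebra.
From mathcomp Require Import algC zify ring.
From mathcomp Require Import boolp reals.
Set Implicit Arguments. Unset Strict Implicit. Unset Printing Implicit Defensive.
Import Order.TTheory GRing.Theory Num.Theory.
Local Open Scope ring_scope.

(* Chains are compared coefficientwise, i.e. through the pairings [wsum g]
   with functions [g] that respect [simplex_eq].  For an m-simplex t and an
   n-simplex u, the faces of t * u of index j <= m are the joins of the faces
   of t with u, and those of index m+1+j the joins of t with the faces of u;
   when t (resp. u) is a point, the face opposite to it is u (resp. t).
   Reading the border of a 0-chain as its augmentation, this is the Leibniz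
   rule d(c * c') = d c * c' + q^(m+1) c * d c' for chains of pure dimensions
   m and n.  Since the augmentation of d^m t is [m+1]_q!, the Newton terms are
   the iterated augmented borders, so
   d(N^a t * N^b u) = N^(a+1) t * N^b u + q^(m+1-a) N^a t * N^(b+1) u,
   and the coefficients of the theorem obey the matching q-Pascal rule. *)

Section Faces.
Variable R : realType.

Ltac case_nat_ifs := repeat match goal with
  | |- context [if (?a < ?b)%N then _ else _] => case: (ltnP a b) => ?
  | |- context [if (?a <= ?b)%N then _ else _] => case: (leqP a b) => ?
  | |- context [if ?a == ?b then _ else _] => case: (@eqP nat a b) => ?
  end; first [done | (exfalso; lia) | (congr (_ _); lia) | idtac].

Lemma faceSS j (y : pt R) i : face j.+1 y i.+1 = face j (fun k => y k.+1) i.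
Proof. by rewrite /face ltnS eqSS; case_nat_ifs. Qed.

Lemma sum_face j n (y : pt R) : (j <= n)%N ->
  \sum_(i < n.+1) face j y i = \sum_(i < n) y i.
Proof.
elim: j n y => [|j IH] n y le_jn.
  by rewrite big_ord_recl add0r; apply: eq_bigr => i _.
case: n le_jn => [//|n] le_jn.
rewrite big_ord_recl [RHS]big_ord_recl; congr (_ + _).
by rewrite -(IH n (fun k => y k.+1)) //; apply: eq_bigr => i _; rewrite faceSS.
Qed.

Lemma face_inDelta n j (x : pt R) :
  (j <= n.+1)%N -> inDelta n x -> inDelta n.+1 (face j x).
Proof.
move=> le_jn [x_ge0 x_out x_sum]; split; last by rewrite sum_face.
- by move=> i le_in; rewrite /face; case_nat_ifs; apply: x_ge0; lia.
- by move=> i lt_ni; rewrite /face; case_nat_ifs; apply: x_out; lia.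
Qed.

Lemma face_div j (y : pt R) (c : R) :
  (fun i => face j y i / c) = face j (fun i => y i / c).
Proof. by apply: funext => i; rewrite /face; case_nat_ifs; rewrite mul0r. Qed.

Lemma alpha_face_left m j (x : pt R) : (j <= m.+1)%N ->
  alpha m.+1 (face j x) = face j (alpha m x).
Proof. by move=> le_jm; apply: funext => i; rewrite /alpha /face; case_nat_ifs. Qed.

Lemma beta_face_left m n j (x : pt R) : (j <= m.+1)%N ->
  beta m.+1 n (face j x) = beta m n x.
Proof. by move=> le_jm; apply: funext => i; rewrite /beta /face; case_nat_ifs. Qed.

Lemma alpha_face_right m j (x : pt R) : alpha m (face (m.+1 + j) x) = alpha m x.
Proof. by apply: funext => i; rewrite /alpha /face; case_nat_ifs. Qed.

Lemma beta_face_right m n j (x : pt R) : (j <= n.+1)%N ->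
  beta m n.+1 (face (m.+1 + j) x) = face j (beta m n x).
Proof. by move=> le_jn; apply: funext => i; rewrite /beta /face; case_nat_ifs. Qed.

Variable d : nat.
Local Notation simplex := (simplex R d).

Lemma face_sjoin_left (t u : simplex) m j : sdim t = m.+1 -> (j <= m.+1)%N ->
  simplex_eq (Simplex (sdim t + sdim u) (smap (sjoin t u) \o face j))
             (sjoin (Simplex m (smap t \o face j)) u).
Proof.
move=> dim_t le_jm; split => /=; first by rewrite dim_t; lia.
move=> x _; rewrite /sjoin /= dim_t alpha_face_left // beta_face_left //.
by rewrite sum_face // face_div.
Qed.

Lemma face_sjoin_right (t u : simplex) n j : sdim u = n.+1 -> (j <= n.+1)%N ->
  simplex_eq (Simplex (sdim t + sdim u) (smap (sjoin t u) \o face ((sdim t).+1 + j)))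
             (sjoin t (Simplex n (smap u \o face j))).
Proof.
move=> dim_u le_jn; split => /=; first by rewrite dim_u; lia.
move=> x _; rewrite /sjoin /= dim_u alpha_face_right beta_face_right //.
by rewrite sum_face // face_div.
Qed.

Lemma face_first_sjoin (t u : simplex) : sdim t = 0%N ->
  simplex_eq (Simplex (sdim t + sdim u) (smap (sjoin t u) \o face 0)) u.
Proof.
move=> dim_t; split => /=; first by rewrite dim_t.
rewrite dim_t => x [_ x_out x_sum]; rewrite /sjoin /=.
have -> : alpha 0 (face 0 x) = fun _ => 0.
  by apply: funext => i; rewrite /alpha /face; case_nat_ifs.
have -> : beta 0 (sdim u) (face 0 x) = x.
  by apply: funext => i; rewrite /beta /face; case_nat_ifs; rewrite x_out.
by rewrite x_sum oner_eq0 big1 ?eqxx.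
Qed.

Lemma face_last_sjoin (t u : simplex) : sdim u = 0%N ->
  simplex_eq (Simplex (sdim t + sdim u) (smap (sjoin t u) \o face (sdim t).+1)) t.
Proof.
move=> dim_u; split => /=; first by rewrite dim_u addn0.
rewrite dim_u addn0 => x [_ x_out x_sum]; rewrite /sjoin /=.
have -> : alpha (sdim t) (face (sdim t).+1 x) = x.
  by apply: funext => i; rewrite /alpha /face; case_nat_ifs; rewrite x_out.
have -> : beta (sdim t) 0 (face (sdim t).+1 x) = fun _ => 0.
  by apply: funext => i; rewrite /beta /face; case_nat_ifs.
by rewrite big1 ?eqxx.
Qed.

End Faces.

Section Chains.
Variables (R : realType) (d : nat).
Local Notation simplex := (simplex R d).
Local Notation chain := (chain R d).
Local Notation nterm := (nterm R d).

Definition wsum (g : simplex -> algC) (c : chain) : algC :=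
  \sum_(p <- c) p.1 * g p.2.

Definition invariant (g : simplex -> algC) :=
  forall t t', simplex_eq t t' -> g t = g t'.

Lemma wsum_nil g : wsum g [::] = 0.
Proof. by rewrite /wsum big_nil. Qed.

Lemma wsum_unit g t : wsum g [:: (1, t)] = g t.
Proof. by rewrite /wsum big_seq1 mul1r. Qed.

Lemma wsum_scale g a c : wsum g (scale_chain a c) = a * wsum g c.
Proof.
by rewrite /wsum big_map mulr_sumr; apply: eq_bigr => p _; rewrite mulrA.
Qed.

Lemma wsum_map I g (F : I -> algC) (S : I -> simplex) (l : seq I) :
  wsum g [seq (F j, S j) | j <- l] = \sum_(j <- l) F j * g (S j).
Proof. by rewrite /wsum big_map. Qed.

Lemma wsum_flatten g (cs : seq chain) :
  wsum g (flatten cs) = \sum_(c <- cs) wsum g c.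
Proof. by rewrite /wsum big_flatten. Qed.

Lemma wsumD g h c : wsum (fun t => g t + h t) c = wsum g c + wsum h c.
Proof. by rewrite /wsum -big_split; apply: eq_bigr => p _; rewrite mulrDr. Qed.

Lemma wsumZ a g c : wsum (fun t => a * g t) c = a * wsum g c.
Proof. by rewrite /wsum mulr_sumr; apply: eq_bigr => p _; rewrite mulrCA. Qed.

Lemma eq_wsum (P : pred simplex) g h c :
  all (fun p => P p.2) c -> {in P, g =1 h} -> wsum g c = wsum h c.
Proof.
move=> + eq_gh; elim: c => [|p c IHc] /=; first by rewrite !wsum_nil.
by case/andP=> Pp Pc; rewrite /wsum !big_cons eq_gh // -!/(wsum _ _) IHc.
Qed.

Lemma wsum_bd q g c : wsum g (bd q c) = wsum (fun t => wsum g (bd_simplex q t)) c.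
Proof.
by rewrite /bd wsum_flatten big_map; apply: eq_bigr => p _; rewrite wsum_scale.
Qed.

Lemma wsum_cprod g c c' :
  wsum g (cprod c c') = wsum (fun t => wsum (fun u => g (sjoin t u)) c') c.
Proof.
rewrite /cprod /wsum big_allpairs_dep; apply: eq_bigr => p _ /=.
by rewrite mulr_sumr; apply: eq_bigr => p' _; rewrite mulrA.
Qed.

Lemma wsumC (h : simplex -> simplex -> algC) c c' :
  wsum (fun t => wsum (h t) c') c = wsum (fun u => wsum (h^~ u) c) c'.
Proof.
rewrite /wsum.
under eq_bigr do rewrite mulr_sumr.
under [RHS]eq_bigr do rewrite mulr_sumr.
by rewrite exchange_big; apply: eq_bigr => p _; apply: eq_bigr => p' _; rewrite mulrCA.
Qed.

Lemma simplex_eq_sym (t t' : simplex) : simplex_eq t t' -> simplex_eq t' t.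
Proof. by case=> eq_dim eq_map; split=> // x; rewrite -eq_dim => /eq_map. Qed.

Lemma simplex_eq_trans (t1 t2 t3 : simplex) :
  simplex_eq t1 t2 -> simplex_eq t2 t3 -> simplex_eq t1 t3.
Proof.
case=> eq_dim12 eq_map12 [eq_dim23 eq_map23]; split; first by rewrite eq_dim12.
by move=> x x_in; rewrite eq_map12 // eq_map23 // -eq_dim12.
Qed.

Definition indicator (s t : simplex) : algC := if `[< simplex_eq t s >] then 1 else 0.

Lemma indicator_invariant s : invariant (indicator s).
Proof.
move=> t t' tt'; rewrite /indicator.
case: (asboolP (simplex_eq t s)) => ts; case: (asboolP (simplex_eq t' s)) => t's //.
- by case: t's; apply: simplex_eq_trans (simplex_eq_sym tt') ts.
- by case: ts; apply: simplex_eq_trans tt' t's.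
Qed.

Lemma coefE c s : coef c s = wsum (indicator s) c.
Proof.
rewrite /coef /wsum; apply: eq_bigr => p _; rewrite /indicator.
by case: asboolP; rewrite ?mulr1 ?mulr0.
Qed.

Lemma bd_simplexS q (t : simplex) n : sdim t = n.+1 ->
  bd_simplex q t = [seq (q ^+ j, Simplex n (smap t \o face j)) | j <- iota 0 n.+2].
Proof. by rewrite /bd_simplex => ->. Qed.

Lemma invariant_wsum_bd q g : invariant g -> invariant (fun t => wsum g (bd_simplex q t)).
Proof.
move=> inv_g t t' [eq_dim eq_map] /=; rewrite /bd_simplex -eq_dim.
case dim_t: (sdim t) => [//|n].
rewrite !wsum_map; apply: eq_big_seq => j; rewrite mem_iota add0n => lt_jn.
congr (_ * _); apply: inv_g; split => //= x x_in.
by apply: eq_map; rewrite dim_t; apply: face_inDelta => //; lia.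
Qed.

Lemma wsum_bd_sjoin q g (t u : simplex) : invariant g ->
  wsum g (bd_simplex q (sjoin t u)) =
  (if sdim t == 0%N then g u else wsum (fun v => g (sjoin v u)) (bd_simplex q t))
  + q ^+ (sdim t).+1 *
    (if sdim u == 0%N then g t else wsum (fun v => g (sjoin t v)) (bd_simplex q u)).
Proof.
move=> inv_g.
rewrite (@bd_simplexS q _ (sdim t + sdim u)); last by rewrite /= addn1.
rewrite wsum_map -addnS -addSn iotaD big_cat; congr (_ + _).
  have [dim_t|[m dim_t]] : sdim t = 0%N \/ exists m, sdim t = m.+1.
    by case: (sdim t) => [|m]; [left | right; exists m].
    rewrite dim_t big_seq1 expr0 mul1r; apply: inv_g.
    by have := face_first_sjoin u dim_t; rewrite dim_t.
  rewrite dim_t (bd_simplexS q dim_t) wsum_map; apply: eq_big_seq => j.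
  rewrite mem_iota add0n => lt_jm; congr (_ * _); apply: inv_g.
  by have := face_sjoin_left u dim_t (_ : j <= m.+1)%N; rewrite dim_t; apply; lia.
rewrite -[in iota (sdim t).+1 _](addn0 (sdim t).+1) iotaDl big_map.
under eq_bigr do rewrite exprD -mulrA.
rewrite -mulr_sumr; congr (_ * _).
have [dim_u|[n dim_u]] : sdim u = 0%N \/ exists n, sdim u = n.+1.
  by case: (sdim u) => [|n]; [left | right; exists n].
  rewrite dim_u big_seq1 expr0 mul1r !addn0; apply: inv_g.
  by have := face_last_sjoin t dim_u; rewrite dim_u addn0.
rewrite dim_u (bd_simplexS q dim_u) wsum_map; apply: eq_big_seq => j.
rewrite mem_iota add0n => lt_jn; congr (_ * _); apply: inv_g.
by have := face_sjoin_right t dim_u (_ : j <= n.+1)%N; rewrite dim_u; apply; lia.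
Qed.

Definition homog (a : nat) (c : chain) := all (fun p => sdim p.2 == a) c.

Definition augm (c : chain) := wsum (fun _ => 1) c.

Lemma wsum_cst k c : wsum (fun _ => k) c = k * augm c.
Proof. by rewrite /augm -wsumZ; apply: eq_bigr => p _; rewrite mulr1. Qed.

Lemma bd_cons q (p : algC * simplex) (c : chain) :
  bd q (p :: c) = scale_chain p.1 (bd_simplex q p.2) ++ bd q c.
Proof. by []. Qed.

Lemma homog_bd q a c : homog a.+1 c -> homog a (bd q c).
Proof.
elim: c => [//|p c IHc] /andP[/eqP dim_p homog_c].
rewrite bd_cons /homog all_cat -[all _ (bd q c)]/(homog a _) IHc // andbT all_map.
by rewrite (bd_simplexS q dim_p) all_map; apply/allP => j _ /=.
Qed.

Lemma bd_homog0 q c : homog 0 c -> bd q c = [::].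
Proof.
elim: c => [//|p c IHc] /andP[/eqP dim_p homog_c].
by rewrite bd_cons IHc // /bd_simplex dim_p.
Qed.

Lemma homog_bdn q (t : simplex) a : (a <= sdim t)%N ->
  homog (sdim t - a) (bdn q a [:: (1, t)]).
Proof.
elim: a => [|a IHa] le_at; first by rewrite /homog /= subn0 eqxx.
by apply: homog_bd; rewrite subnSK //; apply: IHa; lia.
Qed.

Lemma augm_bd q a c : homog a.+1 c -> augm (bd q c) = qint q a.+2 * augm c.
Proof.
move=> homog_c; rewrite /augm wsum_bd -wsumZ.
apply: (eq_wsum (P := fun t => sdim t == a.+1)) => // t /eqP dim_t.
rewrite (bd_simplexS q dim_t) wsum_map mulr1 /qint -(big_mkord xpredT).
by apply: eq_bigr => j _; rewrite mulr1.
Qed.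

Lemma augm_bdn q (t : simplex) a : (a <= sdim t)%N ->
  augm (bdn q a [:: (1, t)]) * qfact q ((sdim t).+1 - a) = qfact q (sdim t).+1.
Proof.
elim: a => [|a IHa] le_at; first by rewrite /augm wsum_unit mul1r subn0.
have homog_a : homog (sdim t - a.+1).+1 (bdn q a [:: (1, t)]).
  by rewrite subnSK //; apply: homog_bdn; lia.
rewrite /bdn iterS (augm_bd q homog_a) -[RHS]IHa; last by lia.
have -> : ((sdim t).+1 - a.+1 = (sdim t - a.+1).+1)%N by lia.
have -> : ((sdim t).+1 - a = (sdim t - a.+1).+2)%N by lia.
by rewrite /qfact [in RHS]big_ord_recr /=; ring.
Qed.

(* The border in the augmented complex of a chain [c] of pure dimension [a]. *)
Definition aug_bd q (a : nat) (c : chain) : nterm :=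
  if a is 0 then NS R d (augm c) else NC (bd q c).

Lemma nprod_scalarC s (x : nterm) : nprod (NS R d s) x = nprod x (NS R d s).
Proof. by case: x. Qed.

Lemma wsum_bd_cprod q g a b c c' : invariant g -> homog a c -> homog b c' ->
  wsum g (bd q (cprod c c')) =
  wsum g (nprod (aug_bd q a c) (NC c'))
  + q ^+ a.+1 * wsum g (nprod (NC c) (aug_bd q b c')).
Proof.
move=> inv_g homog_c homog_c'; rewrite wsum_bd wsum_cprod.
have -> : wsum (fun t => wsum (fun u => wsum g (bd_simplex q (sjoin t u))) c') c =
    wsum (fun t => wsum (fun u => if a == 0%N then g u
                     else wsum (fun v => g (sjoin v u)) (bd_simplex q t)) c') c
    + q ^+ a.+1 * wsum (fun t => wsum (fun u => if b == 0%N then g t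
                     else wsum (fun v => g (sjoin t v)) (bd_simplex q u)) c') c.
  rewrite -wsumZ -wsumD; apply: (eq_wsum (P := fun t => sdim t == a)) => // t /eqP dim_t.
  rewrite -wsumZ -wsumD; apply: (eq_wsum (P := fun u => sdim u == b)) => // u /eqP dim_u.
  by rewrite wsum_bd_sjoin // dim_t dim_u.
congr (_ + _ * _).
  case: a homog_c => [|a] _; first by rewrite wsum_scale /= wsum_cst mulrC.
  rewrite wsum_cprod wsum_bd /=; apply: eq_bigr => p _; congr (_ * _).
  exact: wsumC.
case: b homog_c' => [|b] _.
  rewrite wsum_scale /= -wsumZ; apply: eq_bigr => p _.
  by congr (_ * _); rewrite wsum_cst mulrC.
by rewrite wsum_cprod /=; apply: eq_bigr => p _; rewrite wsum_bd.
Qed.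

Lemma wsum_bd_nprod_scalar q g a s c : homog a c ->
  wsum g (bd q (nprod (NS R d s) (NC c))) = wsum g (nprod (NS R d s) (aug_bd q a c)).
Proof.
rewrite /= !wsum_bd wsum_scale -wsum_bd.
by case: a => [|a] /= => [/(bd_homog0 q)->|_]; rewrite ?wsum_nil ?mulr0 ?wsum_scale.
Qed.

Lemma newton_le q (t : simplex) a : (a <= sdim t)%N ->
  newton q t a = NC (bdn q a [:: (1, t)]).
Proof. by rewrite /newton => ->. Qed.

Lemma newton_dimS q (t : simplex) :
  newton q t (sdim t).+1 = NS R d (qfact q (sdim t).+1).
Proof. by rewrite /newton ltnn eqxx. Qed.

Lemma newton_gt q (t : simplex) a : ((sdim t).+1 < a)%N -> newton q t a = NC [::].
Proof. by rewrite /newton => lt_ta; rewrite ifN ?ifN_eq //; lia. Qed.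

Lemma newtonS q (t : simplex) a : (a <= sdim t)%N ->
  newton q t a.+1 = aug_bd q (sdim t - a) (bdn q a [:: (1, t)]).
Proof.
rewrite leq_eqVlt => /predU1P[-> | lt_at]; last by rewrite newton_le // -subnSK.
have := augm_bdn q (leqnn (sdim t)).
by rewrite newton_dimS subnn /= subSnn /qfact big_ord1 /qint big_ord1 mulr1 => ->.
Qed.

Lemma nprod_nilL (x : nterm) : nprod (NC [::]) x = [::].
Proof. by case: x. Qed.

Lemma nprod_nilR (x : nterm) : nprod x (NC [::]) = [::].
Proof. by case: x => //= c; elim: c. Qed.

Lemma wsum_bd_nprod_newton q g (tau sigma : simplex) a b : invariant g ->
  wsum g (bd q (nprod (newton q tau a) (newton q sigma b))) =
  wsum g (nprod (newton q tau a.+1) (newton q sigma b))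
  + q ^+ ((sdim tau).+1 - a) * wsum g (nprod (newton q tau a) (newton q sigma b.+1)).
Proof.
move=> inv_g.
have [lt_ta|le_at] := ltnP (sdim tau).+1 a.
  by rewrite !(newton_gt q (t := tau)) ?nprod_nilL ?wsum_nil ?mulr0 ?addr0 //; lia.
have [lt_sb|le_bs] := ltnP (sdim sigma).+1 b.
  by rewrite !(newton_gt q (t := sigma)) ?nprod_nilR ?wsum_nil ?mulr0 ?addr0 //; lia.
have [le_at'|->] : (a <= sdim tau)%N \/ a = (sdim tau).+1 by lia.
  have [le_bs'|->] : (b <= sdim sigma)%N \/ b = (sdim sigma).+1 by lia.
    rewrite (newton_le q le_at') (newton_le q le_bs').
    rewrite (newtonS q le_at') (newtonS q le_bs') subSn //.
    exact: wsum_bd_cprod inv_g (homog_bdn q le_at') (homog_bdn q le_bs').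
  rewrite newton_dimS (newton_gt q (a := (sdim sigma).+2)) //.
  rewrite nprod_nilR wsum_nil mulr0 addr0.
  rewrite (newton_le q le_at') (newtonS q le_at') -!nprod_scalarC.
  exact: wsum_bd_nprod_scalar (homog_bdn q le_at').
rewrite newton_dimS (newton_gt q (a := (sdim tau).+2)) //.
rewrite nprod_nilL wsum_nil add0r subnn mul1r.
have [le_bs'|->] : (b <= sdim sigma)%N \/ b = (sdim sigma).+1 by lia.
  rewrite (newton_le q le_bs') (newtonS q le_bs').
  exact: wsum_bd_nprod_scalar (homog_bdn q le_bs').
by rewrite newton_dimS (newton_gt q (a := (sdim sigma).+2)) // nprod_nilR.
Qed.

End Chains.

Lemma qbinom_gt q n k : (n < k)%N -> qbinom q n k = 0.
Proof. by elim: n k => [|n IHn] [|k] //= lt_nk; rewrite !IHn ?mulr0 ?addr0 //; lia. Qed.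

Definition newton_coef (q : algC) (m k i : nat) : algC :=
  q ^ (i%:Z * (m%:Z + 1 - k%:Z + i%:Z)) * qbinom q k i.

Lemma newton_coef0 q m k : newton_coef q m k 0 = 1.
Proof. by rewrite /newton_coef mul0r expr0z mul1r; case: k. Qed.

Lemma newton_coefS q m k i : (i <= k)%N -> (k - i <= m.+1)%N ->
  newton_coef q m k.+1 i.+1
  = newton_coef q m k i.+1 + newton_coef q m k i * q ^+ (m.+1 - (k - i)).
Proof.
move=> le_ik le_kim; set z := (m.+1 - (k - i))%N.
rewrite /newton_coef.
have -> : m%:Z + 1 - k.+1%:Z + i.+1%:Z = z%:Z by rewrite /z; lia.
have -> : m%:Z + 1 - k%:Z + i.+1%:Z = (z + 1)%N%:Z by rewrite /z; lia.
have -> : m%:Z + 1 - k%:Z + i%:Z = z%:Z by rewrite /z; lia.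
rewrite -!PoszM -!exprnP /=.
by rewrite mulnDr muln1 mulSn !exprD; ring.
Qed.

Lemma sum_pascal_step (W : nat -> nat -> algC) (c : nat -> nat -> algC)
    (e : nat -> algC) k :
  c k.+1 0%N = c k 0%N -> c k k.+1 = 0 ->
  (forall i, (i <= k)%N -> c k.+1 i.+1 * W (k - i)%N i.+1 =
      (c k i.+1 + c k i * e (k - i)%N) * W (k - i)%N i.+1) ->
  \sum_(i < k.+1) c k i * (W (k - i).+1 i + e (k - i)%N * W (k - i)%N i.+1) =
  \sum_(i < k.+2) c k.+1 i * W (k.+1 - i)%N i.
Proof.
move=> c_0 c_out c_pascal.
rewrite [RHS]big_ord_recl subn0 c_0.
under eq_bigr do rewrite mulrDr.
rewrite big_split /= big_ord_recl subn0 -addrA; congr (_ + _).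
have -> : \sum_(i < k) c k (bump 0 i) * W (k - bump 0 i).+1 (bump 0 i) =
          \sum_(i < k.+1) c k i.+1 * W (k - i)%N i.+1.
  rewrite big_ord_recr /= c_out mul0r addr0; apply: eq_bigr => i _.
  by rewrite /bump /= subnSK.
rewrite -big_split; apply: eq_bigr => i _ /=.
by rewrite /bump /= subSS c_pascal ?mulrDl ?mulrA // -ltnS.
Qed.

Lemma wsum_bdn_sjoin (R : realType) (d : nat) q g (tau sigma : simplex R d) k :
  invariant g ->
  wsum g (bdn q k [:: (1, sjoin tau sigma)]) =
  \sum_(i < k.+1) newton_coef q (sdim tau) k i *
      wsum g (nprod (newton q tau (k - i)) (newton q sigma i)).
Proof.
elim: k g => [|k IHk] g inv_g.
  by rewrite big_ord1 newton_coef0 mul1r !newton_le //= wsum_cprod !wsum_unit.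
rewrite /bdn iterS -/(bdn _ _ _) wsum_bd (IHk _ (invariant_wsum_bd q inv_g)).
under eq_bigr do rewrite -wsum_bd wsum_bd_nprod_newton //.
apply: (sum_pascal_step (c := newton_coef q (sdim tau))
  (W := fun a b => wsum g (nprod (newton q tau a) (newton q sigma b)))
  (e := fun a => q ^+ ((sdim tau).+1 - a))) => [||i le_ik].
- by rewrite !newton_coef0.
- by rewrite /newton_coef qbinom_gt ?mulr0.
- have [le_kit|lt_tki] := leqP (k - i) (sdim tau).+1; first by rewrite newton_coefS.
  by rewrite newton_gt // nprod_nilL wsum_nil !mulr0.
Qed.

Theorem proposition4p4 (R : realType) (d N : nat) (q : algC)
    (X : 'rV[R]_d -> Prop) (tau sigma : simplex R d) :
  prime N -> (3 <= N)%N -> q ^+ N = 1 -> q != 1 ->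
  convex_set X -> singular_in X tau -> singular_in X sigma ->
  forall k : nat,
    chain_eq (bdn q k [:: (1, sjoin tau sigma)])
      (flatten [seq scale_chain
                  (q ^ (i%:Z * ((sdim tau)%:Z + 1 - k%:Z + i%:Z))
                     * qbinom q k i)
                  (nprod (newton q tau (k - i)) (newton q sigma i))
               | i <- iota 0 k.+1]).
Proof.
move=> _ _ _ _ _ _ _ k s.
rewrite !coefE (wsum_bdn_sjoin _ _ _ _ (indicator_invariant s)) wsum_flatten big_map.
rewrite -[iota 0 k.+1]/(index_iota 0 k.+1) big_mkord.
by apply: eq_bigr => i _; rewrite wsum_scale.
Qed.
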